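(* Let $n\ge2$ and let $X_1,\dots,X_n$ be real-valued random variables, $X_{n:n}=\max_iX_i$, such that $$\lim_{x\to\infty}\frac{\mathbb{P}(X_i>x,X_j>x)}{\mathbb{P}(X_{n:n}>x)}=0\quad\text{for all }1\le i<j\le n.$$ (a) If for every $1\le i\le n$, $X_i\in\mathrm{GMDA}(h_i)$ with $h_i(x)\to\infty$ and $h_i(x)\sim h_1(x)$, then $X_{n:n}\in\mathrm{GMDA}(h_1)$. (b) If $X_i\in\mathcal{L}$ for every $i$ (respectively $X_i\in\mathcal{D}$ for every $i$, respectively $X_i\in\mathcal{R}_{-\alpha}$ for every $i$, for some $\alpha>0$), then $X_{n:n}\in\mathcal{L}$ (respectively $\mathcal{D}$, respectively $\mathcal{R}_{-\alpha}$).
   Context: Real-valued random variables are assumed not concentrated on $(-\infty,0]$. For a distribution function $F$, $\overline{F}=1-F$, $x_F=\sup\{x:F(x)<1\}$. $F\in\mathrm{GMDA}(h)$ means $\lim_{x\to x_F}\overline{F}(x+yh(x))/\overline{F}(x)=e^{-y}$ for all $y\in\mathbb{R}$. $F\in\mathcal{L}$ means $\overline{F}(x)>0$ for all $x\ge0$ and $\overline{F}(x+y)\sim\overline{F}(x)$ for every $y\in\mathbb{R}$. $F\in\mathcal{D}$ means $0<\liminf_{x\to\infty}\overline{F}(xy)/\overline{F}(x)\le\limsup_{x\to\infty}\overline{F}(xy)/\overline{F}(x)<\infty$ for every $y>0$. $F\in\mathcal{R}_{-\alpha}$ means $\overline{F}(x)\sim l(x)x^{-\alpha}$ for a slowly varying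 $l$ (i.e. $l(xy)\sim l(x)$ for all $y>0$). A random variable belongs to a class if its distribution function does. *)

From HB Require Import structures.
From mathcomp Require Import all_boot all_order all_algebra.
From mathcomp Require Import all_classical all_reals all_analysis.
Set Implicit Arguments. Unset Strict Implicit. Unset Printing Implicit Defensive.
Import Order.TTheory GRing.Theory Num.Theory.
Import numFieldNormedType.Exports.
Local Open Scope classical_set_scope.
Local Open Scope ring_scope.

Section Defs.
Variable R : realType.

Definition tail d (T : measurableType d) (P : probability T R) (X : T -> R) (x : R) : R :=
  fine (P [set w | x < X w]).

Definition jtail d (T : measurableType d) (P : probability T R) (X Y : T -> R) (x : R) : R :=
  fine (P [set w | x < X w /\ x < Y w]).

(* X_{n:n} = max_i X_i  (for n >= 1 this is the true maximum) *)
Definition maxrv d (T : measurableType d) (n : nat) (X : 'I_n -> T -> R) (w : T) : R :=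
  fine (\big[maxe/-oo%E]_(i < n) (X i w)%:E).

(* right endpoint x_F = sup {x | F(x) < 1} = sup {x | \bar F(x) > 0} *)
Definition rend (Fb : R -> R) : \bar R :=
  ereal_sup [set x%:E | x in [set x | 0 < Fb x]].

Definition at_rend (Fb : R -> R) : set_system R :=
  match rend Fb with
  | (r%:E)%E => r^'-
  | _ => +oo
  end.

Definition asymp (F : set_system R) (f g : R -> R) : Prop :=
  (fun x => f x / g x) @ F --> (1 : R).

Definition GMDA (Fb : R -> R) (h : R -> R) : Prop :=
  forall y : R, (fun x => Fb (x + y * h x) / Fb x) @ at_rend Fb --> expR (- y).

Definition long_tailed (Fb : R -> R) : Prop :=
  (forall x, 0 <= x -> 0 < Fb x) /\
  forall y : R, asymp +oo (fun x => Fb (x + y)) Fb.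

Definition dom_varying (Fb : R -> R) : Prop :=
  forall y : R, 0 < y ->
    let g := fun x => (Fb (x * y) / Fb x)%:E in
    [/\ (0 < limf_einf g (@pinfty_nbhs R))%E, (limf_einf g (@pinfty_nbhs R) <= limf_esup g (@pinfty_nbhs R))%E
      & (limf_esup g (@pinfty_nbhs R) < +oo)%E].

Definition slowly_varying (l : R -> R) : Prop :=
  forall y : R, 0 < y -> asymp +oo (fun x => l (x * y)) l.

Definition reg_varying (alpha : R) (Fb : R -> R) : Prop :=
  exists l : R -> R, slowly_varying l /\
    asymp +oo Fb (fun x => l x * x `^ (- alpha)).

End Defs.

From HB Require Import structures.
From mathcomp Require Import all_boot all_order all_algebra.
From mathcomp Require Import all_classical all_reals all_analysis.
From mathcomp Require Import ring lra.
Import Order.TTheory GRing.Theory Num.Theory.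
Import numFieldNormedType.Exports.
Local Open Scope classical_set_scope.
Local Open Scope ring_scope.

(* By the Bonferroni inequalities,
     Fb_i <= Fb_max <= S <= Fb_max + sum_(i<j) P(X_i > x, X_j > x),  with S := sum_i Fb_i,
   so the asymptotic independence hypothesis makes the tail Fb_max of the maximum asymptotically
   equivalent to S. The classes L, GMDA and R_(-alpha) are all described by limits of ratios
   Fb (phi x) / Fb x with phi x -> +oo; such a limit passes from the summands to S by the mediant
   inequality, and from S to the equivalent Fb_max. For GMDA the auxiliary functions h_i are first
   replaced by the common h_1, using the monotonicity of the tails and the continuity of
   y |-> e^-y. Class D only needs the two-sided bound Fb_i <= Fb_max <= S. *)

Section RatioLimits.
Context {R : realType}.

Lemma cvg_sum0 {U} {F : set_system U} {FF : Filter F} {m} (f : nat -> U -> R) :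
  (forall i, (i < m)%N -> f i @ F --> 0) -> (fun x => \sum_(i < m) f i x) @ F --> 0.
Proof.
elim: m => [|m IH] f0; first by under eq_fun do rewrite big_ord0; exact: cvg_cst.
under eq_fun do rewrite big_ord_recr /=.
have := cvgD (IH (fun i im => f0 i (ltnW im))) (f0 m (ltnSn m)).
by rewrite addr0; exact.
Qed.

Lemma asymp_neq0 {F : set_system R} {FF : Filter F} {f g : R -> R} :
  asymp F f g -> \forall x \near F, f x != 0 /\ g x != 0.
Proof.
move=> /cvgrPdist_lt /(_ _ ltr01); apply: filterS => x.
by case: eqP => [->|_]; case: eqP => [->|//]; rewrite ?mul0r ?invr0 ?mulr0 subr0 normr1 ltxx.
Qed.

Lemma ratio_cvg1_sandwich (F S J : R -> R) :
  (forall x, F x <= S x) -> (forall x, S x <= F x + J x) ->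
  (\forall x \near +oo, 0 < F x) -> (fun x => J x / F x) @ +oo --> (0 : R) ->
  (fun x => S x / F x) @ +oo --> (1 : R).
Proof.
move=> FS SFJ Fpos /cvgrPdist_le JF; apply/cvgrPdist_le => e e0.
near=> x.
have Fx : 0 < F x by near: x.
have Jx : `|0 - J x / F x| <= e by near: x; exact: JF.
have lb : 1 <= S x / F x by rewrite ler_pdivlMr // mul1r.
have ub : S x / F x <= 1 + J x / F x by rewrite ler_pdivrMr // mulrDl mul1r divfK ?gt_eqF.
rewrite sub0r normrN in Jx; rewrite ler_norml; have := ler_norm (J x / F x); lra.
Unshelve. all: by end_near.
Qed.

Lemma mediant_cvg (I : finType) (i0 : I) (a b : I -> R -> R) (c : R) :
  (forall i, \forall x \near +oo, 0 < b i x) ->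
  (forall i, (fun x => a i x / b i x) @ +oo --> c) ->
  (fun x => (\sum_i a i x) / (\sum_i b i x)) @ +oo --> c.
Proof.
move=> bpos abc; apply/cvgrPdist_le => e e0.
have bpos_all := filter_forall _ bpos.
have abc_e : forall i, \forall x \near +oo, `|c - a i x / b i x| <= e.
  by move=> i; move/cvgrPdist_le : (abc i); exact.
have abc_all := filter_forall _ abc_e.
near=> x.
have bx : forall i, 0 < b i x by near: x; apply: bpos_all.
have ex : forall i, `|c - a i x / b i x| <= e by near: x; apply: abc_all.
have Sb : 0 < \sum_i b i x.
  by rewrite (bigD1 i0) //= ltr_pwDl ?bx // sumr_ge0 // => i _; exact: ltW.
have -> : c - (\sum_i a i x) / (\sum_i b i x)
    = (\sum_i (c - a i x / b i x) * b i x) / (\sum_i b i x).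
  rewrite [X in _ = X / _](eq_bigr (fun i => c * b i x - a i x)); last first.
    by move=> i _; rewrite mulrBl divfK ?gt_eqF ?bx.
  by rewrite sumrB -mulr_sumr mulrBl mulfK ?gt_eqF.
rewrite normrM normfV (gtr0_norm Sb) ler_pdivrMr // mulr_sumr.
apply: le_trans (ler_norm_sum _ _ _) (ler_sum _ _) => i _.
by rewrite normrM (gtr0_norm (bx i)) ler_pM2r ?bx.
Unshelve. all: by end_near.
Qed.

Lemma equiv_ratio_cvg (F S phi : R -> R) (c : R) :
  (forall x, F x <= S x) -> (\forall x \near +oo, 0 < F x) ->
  (fun x => S x / F x) @ +oo --> (1 : R) -> phi @ +oo --> +oo ->
  (fun x => S (phi x) / S x) @ +oo --> c ->
  (fun x => F (phi x) / F x) @ +oo --> c.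
Proof.
move=> FS Fpos SF phiy Sc.
have SFphi : (fun x => S (phi x) / F (phi x)) @ +oo --> (1 : R) by move=> A /SF /phiy.
have Fphi_pos : \forall x \near +oo, 0 < F (phi x) := phiy _ Fpos.
have Sc_SF : (fun x => S (phi x) / S x * (S x / F x * (S (phi x) / F (phi x))^-1)) @ +oo --> c.
  have := cvgM Sc (cvgM SF (cvgV (oner_neq0 R) SFphi)).
  by rewrite invr1 !mulr1; apply.
apply: cvg_trans Sc_SF; apply: near_eq_cvg; near=> x.
have F1 : 0 < F x by near: x.
have F2 : 0 < F (phi x) by near: x.
have S1 : 0 < S x by exact: lt_le_trans F1 (FS x).
have S2 : 0 < S (phi x) by exact: lt_le_trans F2 (FS _).
by rewrite /=; field; rewrite !gt_eqF.
Unshelve. all: by end_near.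
Qed.

End RatioLimits.

Section RightEndpoint.
Context {R : realType}.
Implicit Types F h : R -> R.

Lemma le_rend {F x} : 0 < F x -> (x%:E <= rend F)%E.
Proof. by move=> Fx; apply: ereal_sup_ubound; exists x. Qed.

Lemma at_rend_pinfty {F} : (forall x, 0 < F x) -> at_rend F = +oo.
Proof.
move=> Fpos; rewrite /at_rend; suff -> : rend F = +oo%E by [].
apply/eqP; rewrite eq_le leey /= -ereal_sup_real.
by apply: ereal_sup_le => _ [x _ <-]; exists x => //; exact: Fpos.
Qed.

(* If [F] vanished beyond a finite right endpoint [r], then [F (x + h x) / F x]
   would eventually be [0] as [x -> r^-], contradicting the limit [expR (-1)]. *)
Lemma GMDA_gt0 {F h} : (forall x y, x <= y -> F y <= F x) ->
  (forall x, 0 <= F x) -> 0 < F 0 -> GMDA F h -> h @ at_rend F --> +oo ->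
  forall x, 0 < F x.
Proof.
move=> Fnincr F0 F0pos FGMDA hy z; rewrite lt_neqAle F0 andbT eq_sym.
apply/negP => /eqP Fz.
have rend_le : (rend F <= z%:E)%E.
  apply: ge_ereal_sup => _ [x /= Fx <-]; rewrite lee_fin leNgt; apply/negP => zx.
  by move: (Fnincr z x (ltW zx)); rewrite Fz; lra.
have rend_fin : rend F \is a fin_num.
  by rewrite ge0_fin_numE ?(le_lt_trans rend_le) ?ltry ?le_rend.
set r := fine (rend F).
have rendE : rend F = r%:E by rewrite /r fineK.
have F_gtr : forall t, r < t -> F t = 0.
  move=> t rt; apply/eqP; rewrite eq_le F0 andbT leNgt; apply/negP => Ft.
  by have := le_rend Ft; rewrite rendE lee_fin; lra.
move: (FGMDA 1) hy; rewrite /at_rend rendE => F1 hy.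
have F1_0 : (fun x => F (x + 1 * h x) / F x) @ r^'- --> (0 : R).
  suff F1_eq0 : {near r^'-, (fun _ => 0 : R) =1 (fun x => F (x + 1 * h x) / F x)}.
    exact: cvg_trans (near_eq_cvg F1_eq0) (cvg_cst _).
  near=> x.
  have xr : r - 1 < x by near: x; apply: nbhs_left_gt; lra.
  have hx : 1 < h x by near: x; exact: (hy _ (nbhs_pinfty_gt (num_real (1:R)))).
  by rewrite F_gtr ?mul0r //; lra.
have expR_eq0 : expR (- (1:R)) = 0 by exact: cvg_unique _ F1 F1_0.
by have := expR_gt0 (- (1:R)); rewrite expR_eq0 ltxx.
Unshelve. all: by end_near.
Qed.

End RightEndpoint.

Section GMDAScale.
Context {R : realType}.

Lemma expR_near (y e : R) : 0 < e -> exists2 d : R, 0 < d &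
  `|expR (- y) - expR (- (y + d))| <= e /\ `|expR (- y) - expR (- (y - d))| <= e.
Proof.
move=> e0; have /cvgrPdist_le/(_ e e0)/nbhs_ballP[d d0 yd] := @continuous_expR R (- y).
exists (d / 2); first by rewrite divr_gt0.
have d2 : 0 < d / 2 by rewrite divr_gt0.
have d2d : d / 2 < d by rewrite ltr_pdivrMr // ltr_pMr // ltr1n.
split; apply: yd; rewrite /ball /=.
  have -> : - y - - (y + d / 2) = d / 2 by ring.
  by rewrite gtr0_norm.
have -> : - y - - (y - d / 2) = - (d / 2) by ring.
by rewrite normrN gtr0_norm.
Qed.

(* Monotonicity of [F] squeezes [F (x + y h1 x) / F x] between the ratios at
   [y - d] and [y + d], and [expR] is continuous at [-y]. *)
Lemma GMDA_ratio_equiv_scale (F h h1 : R -> R) (y : R) :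
  (forall x z, x <= z -> F z <= F x) -> (forall x, 0 < F x) ->
  (forall y, (fun x => F (x + y * h x) / F x) @ +oo --> expR (- y)) ->
  (\forall x \near +oo, 0 < h x) -> (fun x => h1 x / h x) @ +oo --> (1 : R) ->
  (fun x => F (x + y * h1 x) / F x) @ +oo --> expR (- y).
Proof.
move=> Fnincr Fpos Fh hpos hh1; apply/cvgrPdist_le => e e0.
have e20 : 0 < e / 2 by rewrite divr_gt0.
have [d d0 [expRd1 expRd2]] := expR_near y (e / 2) e20.
have eta0 : 0 < d / (`|y| + 1) by rewrite divr_gt0 // ltr_wpDl.
move/cvgrPdist_le : (Fh (y + d)) => /(_ _ e20) Fh1.
move/cvgrPdist_le : (Fh (y - d)) => /(_ _ e20) Fh2.
move/cvgrPdist_le : hh1 => /(_ _ eta0) hh1.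
near=> x.
have hx : 0 < h x by near: x.
have g1 : `|expR (- (y + d)) - F (x + (y + d) * h x) / F x| <= e / 2 by near: x.
have g2 : `|expR (- (y - d)) - F (x + (y - d) * h x) / F x| <= e / 2 by near: x.
have g3 : `|1 - h1 x / h x| <= d / (`|y| + 1) by near: x.
set q := h1 x / h x in g3.
have yq : `|y * q - y| <= d.
  have -> : y * q - y = y * (q - 1) by ring.
  rewrite normrM distrC; apply: le_trans (ler_wpM2l (normr_ge0 y) g3) _.
  rewrite mulrA ler_pdivrMr ?ltr_wpDl //; nra.
have -> : x + y * h1 x = x + (y * q) * h x by rewrite /q -mulrA divfK ?gt_eqF.
move: yq; rewrite ler_norml => /andP [yq1 yq2].
have Fx := Fpos x.
have lb : F (x + (y + d) * h x) / F x <= F (x + y * q * h x) / F x.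
  by rewrite ler_pM2r ?invr_gt0 //; apply: Fnincr; rewrite lerD2l ler_pM2r //; lra.
have ub : F (x + y * q * h x) / F x <= F (x + (y - d) * h x) / F x.
  by rewrite ler_pM2r ?invr_gt0 //; apply: Fnincr; rewrite lerD2l ler_pM2r //; lra.
move: g1 g2 expRd1 expRd2; rewrite !ler_norml.
by move=> /andP [? ?] /andP [? ?] /andP [? ?] /andP [? ?]; apply/andP; split; lra.
Unshelve. all: by end_near.
Qed.

(* Since [F] tends to [0], a bounded ratio [F (phi x) / F x] forces [F (phi x)]
   below any fixed level [F M], hence [phi x > M]. *)
Lemma ratio_cvg_argy (F phi : R -> R) (c : R) :
  (forall x z, x <= z -> F z <= F x) -> (forall x, 0 < F x) ->
  F @ +oo --> (0 : R) -> (fun x => F (phi x) / F x) @ +oo --> c ->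
  phi @ +oo --> +oo.
Proof.
move=> Fnincr Fpos F0 Fc; apply/cvgryPgt => M.
set C := `|c| + 1.
have C0 : 0 < C by rewrite ltr_wpDl.
have FM0 : 0 < F M / C by rewrite divr_gt0.
move/cvgrPdist_lt : F0 => /(_ _ FM0) F0.
move/cvgrPdist_le : Fc => /(_ _ ltr01) Fc.
near=> x.
have Fx_small : `|0 - F x| < F M / C by near: x.
have Fc1 : `|c - F (phi x) / F x| <= 1 by near: x.
rewrite sub0r normrN gtr0_norm ?Fpos // ltr_pdivlMr // mulrC in Fx_small.
rewrite ltNge; apply/negP => /Fnincr FMphi.
have Fx := Fpos x.
have : F (phi x) / F x <= C.
  by move: Fc1; rewrite ler_norml => /andP [? ?]; have := ler_norm c; rewrite /C; lra.
rewrite ler_pdivrMr //; lra.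
Unshelve. all: by end_near.
Qed.

End GMDAScale.

Section LimInfSup.
Context {R : realType} {F : set_system R} {PF : ProperFilter F}.
Local Open Scope ereal_scope.

Lemma limf_einf_ge (g : R -> R) (c : R) : F [set x | (c <= g x)%R] ->
  c%:E <= limf_einf (fun x => (g x)%:E) F.
Proof.
move=> Fc; rewrite limf_einfE; apply: le_ereal_sup_tmp.
exists (ereal_inf ((fun x => (g x)%:E) @` [set x | (c <= g x)%R])).
  by exists [set x | (c <= g x)%R].
by apply: le_ereal_inf_tmp => _ [x /= cx <-]; rewrite lee_fin.
Qed.

Lemma limf_esup_le (g : R -> R) (C : R) : F [set x | (g x <= C)%R] ->
  limf_esup (fun x => (g x)%:E) F <= C%:E.
Proof.
move=> FC; rewrite limf_esupE; apply: ge_ereal_inf.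
exists (ereal_sup ((fun x => (g x)%:E) @` [set x | (g x <= C)%R])).
  by exists [set x | (g x <= C)%R].
by apply: ge_ereal_sup => _ [x /= xC <-]; rewrite lee_fin.
Qed.

Lemma limf_einf_gt0_lbound (g : R -> R) : 0 < limf_einf (fun x => (g x)%:E) F ->
  exists2 c : R, (0 < c)%R & F [set x | (c <= g x)%R].
Proof.
rewrite limf_einfE => /ereal_sup_gt [_ [V FV <-]] Vpos.
have [v Vv] := filter_ex FV.
have inf_le : ereal_inf ((fun x => (g x)%:E) @` V) <= (g v)%:E.
  by apply: ereal_inf_lbound; exists v.
have inf_fin : ereal_inf ((fun x => (g x)%:E) @` V) \is a fin_num.
  by rewrite ge0_fin_numE ?(le_lt_trans inf_le) ?ltry // ltW.
exists (fine (ereal_inf ((fun x => (g x)%:E) @` V))); first by rewrite -lte_fin fineK.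
apply: filterS FV => x Vx /=; rewrite -lee_fin fineK //.
by apply: ereal_inf_lbound; exists x.
Qed.

Lemma limf_esup_lty_ubound (g : R -> R) : limf_esup (fun x => (g x)%:E) F < +oo ->
  exists C : R, F [set x | (g x <= C)%R].
Proof.
rewrite limf_esupE => /ereal_inf_lt [_ [V FV <-]] Vfin.
have [v Vv] := filter_ex FV.
have le_sup : (g v)%:E <= ereal_sup ((fun x => (g x)%:E) @` V).
  by apply: ereal_sup_ubound; exists v.
have sup_fin : ereal_sup ((fun x => (g x)%:E) @` V) \is a fin_num.
  rewrite fin_numE; apply/andP; split; last by rewrite lt_eqF.
  by apply/eqP => supNy; rewrite supNy leeNy_eq in le_sup.
exists (fine (ereal_sup ((fun x => (g x)%:E) @` V))).
apply: filterS FV => x Vx /=; rewrite -lee_fin fineK //.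
by apply: ereal_sup_ubound; exists x.
Qed.

Lemma limf_einf_le_esup (g : R -> R) :
  limf_einf (fun x => (g x)%:E) F <= limf_esup (fun x => (g x)%:E) F.
Proof.
rewrite limf_einfE limf_esupE; apply: ge_ereal_sup => _ [V FV <-].
apply: le_ereal_inf_tmp => _ [W FW <-].
have [z [Vz Wz]] := filter_ex (filterI FV FW).
apply: (@le_trans _ _ (g z)%:E).
  by apply: ereal_inf_lbound; exists z.
by apply: ereal_sup_ubound; exists z.
Qed.

End LimInfSup.

Section TailClasses.
Context {R : realType}.
Implicit Types (G : R -> R) (alpha : R).

Lemma dom_varying_ratio_lbound {G} : dom_varying G -> forall y, 0 < y ->
  exists c, 0 < c /\ \forall x \near +oo, c <= G (x * y) / G x.
Proof.
move=> GD y y0; have [Ginf _ _] := GD y y0.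
by have [c c0 Gc] := limf_einf_gt0_lbound _ Ginf; exists c.
Qed.

Lemma dom_varying_ratio_ubound {G} : dom_varying G -> forall y, 0 < y ->
  exists C, \forall x \near +oo, G (x * y) / G x <= C.
Proof. by move=> GD y y0; have [_ _ Gsup] := GD y y0; exact: limf_esup_lty_ubound _ Gsup. Qed.

Lemma dom_varying_gt0 {G} : (forall x, 0 <= G x) -> dom_varying G ->
  \forall x \near +oo, 0 < G x.
Proof.
move=> G0 GD; have [c [c0 Gc]] := dom_varying_ratio_lbound GD 1 ltr01.
apply: filterS Gc => x; rewrite mulr1 lt_neqAle G0 andbT.
by apply: contraTN => /eqP <-; rewrite invr0 mulr0 -ltNge.
Qed.

Lemma dom_varying_of_ratio_bounds G :
  (forall y, 0 < y -> exists c C, 0 < c /\ \forall x \near +oo, c <= G (x * y) / G x <= C) ->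
  dom_varying G.
Proof.
move=> Gb y y0; have [c [C [c0 Gc]]] := Gb y y0; split.
- apply: (@lt_le_trans _ _ c%:E); first by rewrite lte_fin.
  by apply: limf_einf_ge; apply: filterS Gc => x /andP[].
- exact: limf_einf_le_esup.
- apply: le_lt_trans (ltry C); apply: limf_esup_le.
  by apply: filterS Gc => x /andP[].
Qed.

Lemma reg_varying_gt0 {alpha G} : (forall x, 0 <= G x) -> reg_varying alpha G ->
  \forall x \near +oo, 0 < G x.
Proof.
move=> G0 [l [_ Gl]]; apply: filterS (asymp_neq0 Gl) => x [Gx _].
by rewrite lt_neqAle eq_sym Gx G0.
Qed.

Lemma reg_varying_ratio_cvg {alpha G} : reg_varying alpha G -> forall y, 0 < y ->
  (fun x => G (x * y) / G x) @ +oo --> y `^ (- alpha).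
Proof.
move=> [l [lsv Gl]] y y0.
set u := fun x => G x / (l x * x `^ (- alpha)).
have xy_y : (fun x : R => x * y) @ +oo --> +oo by exact: gt0_cvgMly y0 cvg_id.
have uy : (fun x => u (x * y)) @ +oo --> (1 : R) by move=> A /Gl /xy_y.
have ycst : (fun _ : R => y `^ (- alpha)) @ +oo --> y `^ (- alpha) by exact: cvg_cst.
have ulu : (fun x => u (x * y) * (l (x * y) / l x) * y `^ (- alpha) / u x) @ +oo
    --> y `^ (- alpha).
  have := cvgM (cvgM (cvgM uy (lsv y y0)) ycst) (cvgV (oner_neq0 R) Gl).
  by rewrite !mul1r invr1 mulr1; apply.
apply: cvg_trans ulu; apply: near_eq_cvg.
have Glxy := xy_y _ (asymp_neq0 Gl).
near=> x.
have x0 : 0 < x by near: x; exact: nbhs_pinfty_gt (num_real 0).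
have [Gx lx] : G x != 0 /\ l x * x `^ (- alpha) != 0 by near: x; exact: asymp_neq0.
have [Gxy lxy] : G (x * y) != 0 /\ l (x * y) * (x * y) `^ (- alpha) != 0 by near: x; exact: Glxy.
move: lx lxy; rewrite !mulf_eq0 !negb_or => /andP [l1 p1] /andP [l2 p2].
have py : y `^ (- alpha) != 0 by rewrite gt_eqF // powR_gt0.
rewrite /u /= powRM ?ltW // in p2 *.
by field; rewrite Gx p1 l1 py l2.
Unshelve. all: by end_near.
Qed.

Lemma reg_varying_of_ratio_cvg alpha G : (\forall x \near +oo, 0 < G x) ->
  (forall y, 0 < y -> (fun x => G (x * y) / G x) @ +oo --> y `^ (- alpha)) ->
  reg_varying alpha G.
Proof.
move=> Gpos Gy; exists (fun x => G x * x `^ alpha); split=> [y y0|]; rewrite /asymp.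
  have ycst : (fun _ : R => y `^ alpha) @ +oo --> y `^ alpha by exact: cvg_cst.
  have Gyy : (fun x => G (x * y) / G x * y `^ alpha) @ +oo --> (1 : R).
    have := cvgM (Gy y y0) ycst.
    by rewrite powRN mulVf ?gt_eqF ?powR_gt0 //; apply.
  apply: cvg_trans Gyy; apply: near_eq_cvg; near=> x.
  have xpos : 0 < x by near: x; exact: nbhs_pinfty_gt (num_real 0).
  have Gx : 0 < G x by near: x.
  rewrite /= powRM ?ltW //; field.
  by rewrite !gt_eqF ?powR_gt0.
have one : (fun _ : R => 1) @ +oo --> (1 : R) by exact: cvg_cst.
apply: cvg_trans one; apply: near_eq_cvg; near=> x.
have xpos : 0 < x by near: x; exact: nbhs_pinfty_gt (num_real 0).
have Gx : 0 < G x by near: x.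
by rewrite /= powRN -mulrA mulfV ?gt_eqF ?powR_gt0 // mulr1 divff ?gt_eqF.
Unshelve. all: by end_near.
Qed.

End TailClasses.

Section SumOfTails.
Context {R : realType} {I : finType} (i0 : I) {G : I -> R -> R} {F J : R -> R}.
Hypothesis G_ge0 : forall i x, 0 <= G i x.
Hypothesis G_le : forall i x, G i x <= F x.
Hypothesis le_sumG : forall x, F x <= \sum_i G i x.
Hypothesis sumG_le : forall x, \sum_i G i x <= F x + J x.
Hypothesis JF_cvg0 : (fun x => J x / F x) @ +oo --> (0 : R).

Lemma sum_ratio_cvg (phi : R -> R) (c : R) : phi @ +oo --> +oo ->
  (forall i, \forall x \near +oo, 0 < G i x) ->
  (forall i, (fun x => G i (phi x) / G i x) @ +oo --> c) ->
  (fun x => F (phi x) / F x) @ +oo --> c.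
Proof.
move=> phiy Gpos Gc.
have Fpos : \forall x \near +oo, 0 < F x.
  by apply: filterS (Gpos i0) => x /lt_le_trans; apply.
apply: (@equiv_ratio_cvg _ F (fun x => \sum_i G i x) phi c le_sumG Fpos _ phiy).
  exact: ratio_cvg1_sandwich le_sumG sumG_le Fpos JF_cvg0.
exact: mediant_cvg i0 (fun i x => G i (phi x)) G c Gpos Gc.
Qed.

Lemma long_tailed_sum : (forall i, long_tailed (G i)) -> long_tailed F.
Proof.
move=> GL; split=> [x x0|y]; first exact: lt_le_trans ((GL i0).1 x x0) (G_le i0 x).
have Gpos i : \forall x \near +oo, 0 < G i x.
  by near=> x; apply: (GL i).1; near: x; exact: nbhs_pinfty_ge (num_real 0).
by apply: sum_ratio_cvg (cvg_addrr y) Gpos _ => i; exact: (GL i).2.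
Unshelve. all: by end_near.
Qed.

(* [F x <= sum_i G i x <= sum_i G i (x y) / c_i <= (sum_i 1 / c_i) F (x y)],
   and symmetrically for the upper bound. *)
Lemma dom_varying_sum : (forall i, dom_varying (G i)) -> dom_varying F.
Proof.
move=> GD; apply: dom_varying_of_ratio_bounds => y y0.
have [c c_spec] := boolp.choice (fun i => dom_varying_ratio_lbound (GD i) y y0).
have [C C_spec] := boolp.choice (fun i => dom_varying_ratio_ubound (GD i) y y0).
have c0 i : 0 < c i by case: (c_spec i).
have sc0 : 0 < \sum_i (c i)^-1.
  rewrite (bigD1 i0) //= ltr_pwDl ?invr_gt0 // sumr_ge0 // => i _.
  by rewrite invr_ge0 ltW.
have Gpos_all := filter_forall _ (fun i => dom_varying_gt0 (G_ge0 i) (GD i)).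
have c_all := filter_forall _ (fun i => (c_spec i).2).
have C_all := filter_forall _ C_spec.
exists (\sum_i (c i)^-1)^-1, (\sum_i `|C i|); split; first by rewrite invr_gt0.
near=> x.
have Gx : forall i, 0 < G i x by near: x; apply: Gpos_all.
have c_le : forall i, c i <= G i (x * y) / G i x by near: x; apply: c_all.
have le_C : forall i, G i (x * y) / G i x <= C i by near: x; apply: C_all.
have cG i : c i * G i x <= G i (x * y) by rewrite -ler_pdivlMr.
have GC i : G i (x * y) <= C i * G i x by rewrite -ler_pdivrMr.
have Fx : 0 < F x := lt_le_trans (Gx i0) (G_le i0 x).
rewrite ler_pdivlMr // ler_pdivrMl // ler_pdivrMr //; apply/andP; split.
- apply: le_trans (le_sumG x) _; rewrite mulr_suml; apply: ler_sum => i _.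
  by rewrite ler_pdivlMl // (le_trans (cG i)) ?G_le.
- apply: le_trans (le_sumG (x * y)) _; rewrite mulr_suml; apply: ler_sum => i _.
  apply: le_trans (GC i) (le_trans (ler_wpM2r (G_ge0 i x) (ler_norm (C i))) _).
  exact: (ler_wpM2l (normr_ge0 (C i)) (G_le i x)).
Unshelve. all: by end_near.
Qed.

Lemma reg_varying_sum alpha : (forall i, reg_varying alpha (G i)) -> reg_varying alpha F.
Proof.
move=> GR; have Gpos i := reg_varying_gt0 (G_ge0 i) (GR i).
apply: reg_varying_of_ratio_cvg => [|y y0].
  by apply: filterS (Gpos i0) => x /lt_le_trans; apply.
apply: sum_ratio_cvg Gpos _ => [|i]; first exact: gt0_cvgMly y0 cvg_id.
exact: reg_varying_ratio_cvg (GR i) y y0.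
Qed.

(* Every [G i] is positive on the whole line, so all right endpoints are [+oo]. *)
Lemma GMDA_sum (h : I -> R -> R) (i1 : I) :
  (forall i x z, x <= z -> G i z <= G i x) -> (forall i, 0 < G i 0) ->
  G i1 @ +oo --> (0 : R) ->
  (forall i, GMDA (G i) (h i)) -> (forall i, h i @ at_rend (G i) --> +oo) ->
  (forall i, asymp (at_rend (G i)) (h i) (h i1)) -> GMDA F (h i1).
Proof.
move=> Gnincr G0pos G1_cvg0 GG hy hh1.
have Gpos i : forall x, 0 < G i x := GMDA_gt0 (Gnincr i) (G_ge0 i) (G0pos i) (GG i) (hy i).
have rendG i : at_rend (G i) = +oo := at_rend_pinfty (Gpos i).
have Fpos x : 0 < F x := lt_le_trans (Gpos i0 x) (G_le i0 x).
rewrite /GMDA at_rend_pinfty // => y.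
have GGy i y' : (fun x => G i (x + y' * h i x) / G i x) @ +oo --> expR (- y').
  by have := GG i y'; rewrite rendG.
apply: sum_ratio_cvg => [|i|i]; last 2 first.
- by apply: nearW => x; exact: Gpos.
- apply: GMDA_ratio_equiv_scale (Gnincr i) (Gpos i) (GGy i) _ _.
    by have := hy i; rewrite rendG => /(_ _ (nbhs_pinfty_gt (num_real 0))).
  have := hh1 i; rewrite /asymp rendG => /(cvgV (oner_neq0 R)); rewrite invr1.
  by apply: cvg_trans; apply: near_eq_cvg; apply: nearW => x /=; rewrite invf_div.
exact: ratio_cvg_argy (Gnincr i1) (Gpos i1) G1_cvg0 (GGy i1 y).
Qed.

End SumOfTails.

Section FiniteProbability.
Context {R : realType} {d : measure_display} {T : measurableType d} (P : probability T R).

Definition fprob (A : set T) : R := fine (P A).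

Lemma fprobE A : measurable A -> (fprob A)%:E = P A.
Proof. by move=> mA; rewrite /fprob fineK// fin_num_measure. Qed.

Lemma fprob_ge0 A : 0 <= fprob A.
Proof. exact/fine_ge0/measure_ge0. Qed.

Lemma le_fprob A B : measurable A -> measurable B -> A `<=` B -> fprob A <= fprob B.
Proof. by move=> mA mB AB; rewrite -lee_fin !fprobE//; apply: le_measure; rewrite ?inE. Qed.

Lemma fprobU A B : measurable A -> measurable B ->
  fprob (A `|` B) = fprob A + fprob B - fprob (A `&` B).
Proof.
move=> mA mB; apply: EFin_inj.
rewrite EFinB EFinD !fprobE//; [|exact: measurableI|exact: measurableU].
by rewrite measureUfinl// (le_lt_trans (probability_le1 _ _)) ?ltey.
Qed.

Lemma fprobU_le A B : measurable A -> measurable B -> fprob (A `|` B) <= fprob A + fprob B.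
Proof. by move=> mA mB; rewrite fprobU// lerBlDr lerDl fprob_ge0. Qed.

Lemma fprob_bigsetU_le (A : nat -> set T) m : (forall k, measurable (A k)) ->
  fprob (\big[setU/set0]_(i < m) A i) <= \sum_(i < m) fprob (A i).
Proof.
move=> mA; elim: m => [|m IH]; first by rewrite !big_ord0 /fprob measure0.
rewrite !big_ord_recr /=.
have mU : measurable (\big[setU/set0]_(i < m) A i) by exact: bigsetU_measurable.
by rewrite (le_trans (fprobU_le _ _ mU (mA m)))// lerD2r.
Qed.

Lemma sum_fprob_le_bigsetU (A : nat -> set T) m : (forall k, measurable (A k)) ->
  \sum_(i < m) fprob (A i) <= fprob (\big[setU/set0]_(i < m) A i)
     + \sum_(j < m) \sum_(i < j) fprob (A i `&` A j).
Proof.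
move=> mA; elim: m => [|m IH]; first by rewrite !big_ord0 addr0 /fprob measure0.
have mU : measurable (\big[setU/set0]_(i < m) A i) by exact: bigsetU_measurable.
rewrite !big_ord_recr /= fprobU//.
suff : fprob ((\big[setU/set0]_(i < m) A i) `&` A m) <= \sum_(i < m) fprob (A i `&` A m)
  by lra.
rewrite -bigcup_mkord setI_bigcupl bigcup_mkord.
apply: (fprob_bigsetU_le (fun i => A i `&` A m)) => k; exact: measurableI.
Qed.

End FiniteProbability.

Section Tail.
Context {R : realType} {d : measure_display} {T : measurableType d} {P : probability T R}.

Lemma measurable_gt (Y : {RV P >-> R}) x : measurable [set w | x < Y w].
Proof.
have -> : [set w | x < Y w] = Y @^-1` `]x, +oo[.
  by apply/seteqP; split => w /=; rewrite in_itv /= andbT.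
exact: measurable_funPTI.
Qed.

Lemma tail_ge0 (Y : {RV P >-> R}) x : 0 <= tail P Y x.
Proof. exact: fprob_ge0. Qed.

Lemma le_tail (Y : {RV P >-> R}) x y : x <= y -> tail P Y y <= tail P Y x.
Proof.
move=> xy; apply: le_fprob; try exact: measurable_gt.
by move=> w /= /(le_lt_trans xy).
Qed.

Lemma cvg_taily0 (Y : {RV P >-> R}) : tail P Y @ +oo --> 0.
Proof.
have -> : tail P Y = fine \o ccdf Y.
  apply/funext => x /=; rewrite /ccdf /distribution /pushforward /tail; congr (fine (P _)).
  by apply/seteqP; split => w /=; rewrite in_itv /= andbT.
exact: (fine_cvg (cvg_ccdfy0 Y)).
Qed.

End Tail.

Section MaximumTail.
Context {R : realType} {d : measure_display} {T : measurableType d} {P : probability T R}.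
Context {n : nat} (X : 'I_n.+1 -> {RV P >-> R}).
Local Notation Xmax := (maxrv (fun k => X k : T -> R)).

Lemma maxrv_gt x w : x < Xmax w <-> exists i, x < X i w.
Proof.
rewrite /maxrv (bigmax_eq_arg _ ord0) //=; last by move=> i _; exact: leNye.
set j := [arg max_(_ > _ | _) _]%O.
split=> [xj|[i xi]]; first by exists j.
apply: (lt_le_trans xi).
have := @le_bigmax _ _ _ (-oo)%E (fun i => (X i w)%:E) i.
by rewrite (bigmax_eq_arg _ ord0) // => k _; exact: leNye.
Qed.

Lemma maxrv_gt_bigsetU x :
  [set w | x < Xmax w] = \big[setU/set0]_(k < n.+1) [set w | x < X (inord k) w].
Proof.
rewrite -(bigcup_mkord _ (fun k => [set w | x < X (inord k) w])); apply/seteqP; split => w /=.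
  by move/maxrv_gt => [i xi]; exists i => //=; rewrite inord_val.
by move=> [k /= kn] xk; apply/maxrv_gt; exists (inord k).
Qed.

Lemma tail_le_maxrv i x : tail P (X i) x <= tail P Xmax x.
Proof.
apply: le_fprob; first exact: measurable_gt.
  by rewrite maxrv_gt_bigsetU; apply: bigsetU_measurable => k _; exact: measurable_gt.
by move=> w /= xi; apply/maxrv_gt; exists i.
Qed.

Lemma tail_maxrv_le_sum x : tail P Xmax x <= \sum_i tail P (X i) x.
Proof.
rewrite /tail maxrv_gt_bigsetU -/(fprob P _).
apply: le_trans (fprob_bigsetU_le P _ n.+1 (fun k => measurable_gt (X (inord k)) x)) _.
by under eq_bigr do rewrite inord_val.
Qed.

Definition jtail_sum x :=
  \sum_(j < n.+1) \sum_(i < j) jtail P (X (inord i)) (X (inord j)) x.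

Lemma sum_tail_le_maxrv x : \sum_i tail P (X i) x <= tail P Xmax x + jtail_sum x.
Proof.
have := sum_fprob_le_bigsetU P _ n.+1 (fun k => measurable_gt (X (inord k)) x).
by rewrite /tail maxrv_gt_bigsetU; under eq_bigr do rewrite inord_val.
Qed.

Lemma jtail_sum_maxrv_cvg0 :
  (forall i j : 'I_n.+1, (i < j)%N ->
     (fun x => jtail P (X i) (X j) x / tail P Xmax x) @ +oo --> (0 : R)) ->
  (fun x => jtail_sum x / tail P Xmax x) @ +oo --> (0 : R).
Proof.
move=> Xjoint; under eq_fun do rewrite /jtail_sum mulr_suml.
under eq_fun do under eq_bigr do rewrite mulr_suml.
pose J i j x := jtail P (X (inord i)) (X (inord j)) x / tail P Xmax x.
apply: (cvg_sum0 (fun j x => \sum_(i < j) J i j x)) => j jn.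
apply: (cvg_sum0 (fun i => J i j)) => i ij.
by apply: Xjoint; rewrite !inordK // (ltn_trans ij).
Qed.

End MaximumTail.

Theorem lemma4p1 (R : realType) (d : measure_display) (T : measurableType d)
  (P : probability T R) (n : nat) (X : 'I_n -> {RV P >-> R}) :
  (2 <= n)%N ->
  (forall i, 0 < tail P (X i) 0) ->
  (forall i j : 'I_n, (i < j)%N ->
     (fun x => jtail P (X i) (X j) x / tail P (maxrv (fun k => X k : T -> R)) x)
       @ +oo --> (0 : R)) ->
  let Fmax := tail P (maxrv (fun k => X k : T -> R)) in
  (forall (h : 'I_n -> R -> R) (i1 : 'I_n), nat_of_ord i1 = 0%N ->
     (forall i, GMDA (tail P (X i)) (h i)) ->
     (forall i, h i @ at_rend (tail P (X i)) --> +oo) ->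
     (forall i, asymp (at_rend (tail P (X i))) (h i) (h i1)) ->
     GMDA Fmax (h i1)) /\
  ((forall i, long_tailed (tail P (X i))) -> long_tailed Fmax) /\
  ((forall i, dom_varying (tail P (X i))) -> dom_varying Fmax) /\
  (forall alpha : R, 0 < alpha ->
     (forall i, reg_varying alpha (tail P (X i))) -> reg_varying alpha Fmax).
Proof.
case: n X => [//|n] X _ Xpos Xjoint Fmax.
have G_ge0 i x : 0 <= tail P (X i) x := tail_ge0 (X i) x.
have G_le := tail_le_maxrv X.
have le_sumG := tail_maxrv_le_sum X.
have sumG_le := sum_tail_le_maxrv X.
have JF_cvg0 := jtail_sum_maxrv_cvg0 X Xjoint.
(* [i1 = 0] is not needed (any index works), nor is [0 < alpha]. *)
split; [|split; [|split]].
- move=> h i1 _; apply: (GMDA_sum ord0 G_ge0 G_le le_sumG sumG_le JF_cvg0) => //.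
    by move=> i x z; exact: le_tail.
  exact: cvg_taily0.
- exact: (long_tailed_sum ord0 G_le le_sumG sumG_le JF_cvg0).
- exact: (dom_varying_sum ord0 G_ge0 G_le le_sumG).
- by move=> alpha _; exact: (reg_varying_sum ord0 G_ge0 G_le le_sumG sumG_le JF_cvg0).
Qed.
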